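(* Let $H=(\mathcal{V},\mathcal{E})$ be a hypergraph, $t:\mathcal{E}\to\mathcal{V}$ a representative function with image $R$, and let $C$ be a proper vertex colouring of the co-occurrence graph $G_{R,t}$ with positive colours. Then $C$ (with all vertices of $\mathcal{V}\setminus R$ receiving colour $0$) is a conflict-free colouring of $H$. Moreover, $\chi_{cf}(H)\leq\chi_{min}$.
   Context: Hyperedges of $H$ are nonempty subsets of the finite set $\mathcal{V}$. A conflict-free colouring of $H$ is a function $C:\mathcal{V}\to\{0,1,2,\dots\}$ such that every hyperedge $E$ contains a colour $j\geq1$ with $|E\cap C^{-1}(j)|=1$; $\chi_{cf}(H)$ is the minimum number of non-zero colours in such a colouring. A representative function is a map $t:\mathcal{E}\to\mathcal{V}$ with $t(E)\in E$; $R=t(\mathcal{E})$. The co-occurrence graph $G_{R,t}$ has vertex set $R$, with distinct $u,v$ adjacent iff some $E\in\mathcal{E}$ has $u,v\in E$ and $t(E)\in\{u,v\}$. $\chi_{min}$ is the minimum of the chromatic number $\chi(G_{R,t})$ over all representative functions $t$. *)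

From mathcomp Require Import all_boot.
From Stdlib Require Import ClassicalEpsilon.
Set Implicit Arguments. Unset Strict Implicit. Unset Printing Implicit Defensive.

Record hypergraph (V : finType) := Hypergraph {
  edges : {set {set V}};
  edges_nonempty : set0 \notin edges
}.

(* classical boolean reflection of a Prop (used only to take minima with ex_minn) *)
Definition asb (P : Prop) : bool :=
  if excluded_middle_informative P then true else false.

Lemma asbT (P : Prop) : P -> asb P.
Proof. by rewrite /asb; case: excluded_middle_informative. Qed.

Lemma asbP (P : Prop) : asb P -> P.
Proof. by rewrite /asb; case: excluded_middle_informative. Qed.

Lemma ex_asb (P : nat -> Prop) : (exists k, P k) -> exists k, asb (P k).
Proof. by case=> k Hk; exists k; apply: asbT. Qed.

Section Defs.
Variable (V : finType) (H : hypergraph V).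

Definition edge_t := {E : {set V} | E \in edges H}.

(* C : V -> nat, colour 0 meaning "uncoloured". *)
Definition conflict_free (C : V -> nat) : Prop :=
  forall E, E \in edges H ->
    exists j, 1 <= j /\ #|[set v in E | C v == j]| = 1.

Definition num_colours (C : V -> nat) : nat :=
  size (undup [seq C v | v <- enum V & C v != 0]).

Lemma exists_cf : exists k, exists C, conflict_free C /\ num_colours C = k.
Proof.
exists (num_colours (fun v => (enum_rank v).+1)), (fun v => (enum_rank v).+1).
split=> // E HE.
have : E != set0 by apply: contraNneq (edges_nonempty H) => <-.
case/set0Pn=> v Hv; exists (enum_rank v).+1; split=> //.
rewrite -(cards1 v); apply: eq_card => w; rewrite !inE eqSS.
rewrite (inj_eq val_inj) (inj_eq enum_rank_inj).
by case: (w =P v)=> [->|]; rewrite ?Hv ?andbF.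
Qed.

Definition chi_cf : nat :=
  ex_minn (ex_asb exists_cf).

Definition representative (t : {ffun edge_t -> V}) : Prop :=
  forall e : edge_t, t e \in val e.

Definition rep_set (t : {ffun edge_t -> V}) : {set V} :=
  [set t e | e : edge_t].

(* adjacency of the co-occurrence graph G_{R,t} (its vertex set is rep_set t) *)
Definition cooc (t : {ffun edge_t -> V}) (u v : V) : bool :=
  (u != v) && [exists e : edge_t,
     [&& u \in val e, v \in val e & (t e == u) || (t e == v)]].

Definition cooc_colourable (t : {ffun edge_t -> V}) (k : nat) : Prop :=
  exists c : V -> 'I_k, forall u v, u \in rep_set t -> v \in rep_set t ->
    cooc t u v -> c u != c v.

Lemma exists_cooc_colouring t : exists k, cooc_colourable t k.
Proof.
exists #|V|, (@enum_rank V) => u v _ _ /andP[Huv _].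
by rewrite (inj_eq enum_rank_inj).
Qed.

Definition chi_cooc (t : {ffun edge_t -> V}) : nat :=
  ex_minn (ex_asb (exists_cooc_colouring t)).

Lemma edge_nonempty (e : edge_t) : exists v, v \in val e.
Proof.
apply/set0Pn; apply: contraNneq (edges_nonempty H) => <-; exact: valP.
Qed.

Definition some_rep : {ffun edge_t -> V} := [ffun e => xchoose (edge_nonempty e)].

Lemma exists_chi_rep : exists k, exists t, representative t /\ chi_cooc t = k.
Proof.
exists (chi_cooc some_rep), some_rep; split=> // e.
rewrite ffunE; exact: xchooseP.
Qed.

Definition chi_min : nat := ex_minn (ex_asb exists_chi_rep).

End Defs.

(* If t picks a representative t(E) in every hyperedge E, then t(E) is the
   unique vertex of E carrying the colour C(t(E)): every other coloured vertex
   of E lies in R and is adjacent to t(E) in G_{R,t}, so a proper colouring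
   gives it a different colour, and the uncoloured vertices outside R have
   colour 0 < C(t(E)). Shifting an optimal colouring of G_{R,t} with values in
   {0, ..., k-1} to {1, ..., k} thus yields a conflict-free colouring with at
   most k non-zero colours, whence chi_cf <= chi(G_{R,t}) for every t. *)
From mathcomp Require Import all_boot.

Set Implicit Arguments.
Unset Strict Implicit.
Unset Printing Implicit Defensive.

Section CoOccurrenceColouring.

Variables (V : finType) (H : hypergraph V).

Lemma num_colours_le (C : V -> nat) k : (forall v, C v <= k) -> num_colours C <= k.
Proof.
move=> C_le_k; rewrite /num_colours -[k in _ <= k](size_iota 1).
apply: uniq_leq_size (undup_uniq _) _ => x.
rewrite mem_undup => /mapP[v]; rewrite mem_filter => /andP[Cv_nz _] ->.
by rewrite mem_iota add1n lt0n Cv_nz ltnS C_le_k.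
Qed.

Lemma chi_cf_le (C : V -> nat) : conflict_free H C -> chi_cf H <= num_colours C.
Proof.
move=> cfC; rewrite /chi_cf; case: ex_minnP => m _ min_m.
by apply: min_m; apply: asbT; exists C.
Qed.

Lemma chi_coocP (t : {ffun edge_t H -> V}) : cooc_colourable t (chi_cooc t).
Proof. by rewrite /chi_cooc; case: ex_minnP => k /asbP. Qed.

Lemma chi_minP : exists2 t : {ffun edge_t H -> V}, representative t & chi_cooc t = chi_min H.
Proof. by rewrite /chi_min; case: ex_minnP => k /asbP[t [rep_t <-]] _; exists t. Qed.

Lemma conflict_free_cooc_colouring (t : {ffun edge_t H -> V}) (C : V -> nat) :
  representative t ->
  (forall v, v \in rep_set t -> 0 < C v) ->
  (forall u v, u \in rep_set t -> v \in rep_set t -> cooc t u v -> C u != C v) ->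
  conflict_free H (fun v => if v \in rep_set t then C v else 0).
Proof.
move=> rep_t C_pos C_proper E EH; pose e : edge_t H := exist _ E EH.
have te_R : t e \in rep_set t by apply/imsetP; exists e.
exists (C (t e)); split; first exact: C_pos.
rewrite -(cards1 (t e)); apply: eq_card => w; rewrite !inE.
have [-> | w_ne_te] := eqVneq w (t e); first by rewrite rep_t te_R eqxx.
apply/negbTE/andP => -[wE]; case: ifP => w_R; last first.
  by move/eqP=> C_te_0; move: (C_pos _ te_R); rewrite -C_te_0.
apply/negP/C_proper => //; rewrite /cooc w_ne_te; apply/existsP; exists e.
by rewrite wE rep_t eqxx orbT.
Qed.

Lemma chi_cf_le_chi_cooc (t : {ffun edge_t H -> V}) :
  representative t -> chi_cf H <= chi_cooc t.
Proof.
move=> rep_t; have [c c_proper] := chi_coocP t.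
have cfC : conflict_free H (fun v => if v \in rep_set t then (c v).+1 else 0).
  exact: conflict_free_cooc_colouring.
apply: leq_trans (chi_cf_le cfC) (num_colours_le _) => v.
by case: ifP.
Qed.

End CoOccurrenceColouring.

Theorem lemma1 (V : finType) (H : hypergraph V) (t : {ffun edge_t H -> V})
    (C : V -> nat) :
  representative t ->
  (forall v, v \in rep_set t -> 0 < C v) ->
  (forall u v, u \in rep_set t -> v \in rep_set t -> cooc t u v -> C u != C v) ->
  conflict_free H (fun v => if v \in rep_set t then C v else 0)
  /\ chi_cf H <= chi_min H.
Proof.
move=> rep_t C_pos C_proper; split; first exact: conflict_free_cooc_colouring.
have [t' rep_t' <-] := chi_minP H.
exact: chi_cf_le_chi_cooc.
Qed.
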